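(* Let $\mu\ge 0$. Then, for $y>0$ and $x\ge 0$: (i) $\dfrac{\partial^2 Q_{\mu}(x,y)}{\partial x^2}\le 0$ whenever $0<y\le \mu+1$ and $x\ge 0$, with equality only for $x=0$, $y=\mu+1$; (ii) $\dfrac{\partial^2 Q_{\mu}(x,y)}{\partial x^2}<0$ whenever $x>y-\mu-\tfrac12$; (iii) $\dfrac{\partial^2 Q_{\mu}(x,y)}{\partial x^2}>0$ whenever $x<y-\mu-1$.
   Context: For real $\mu$, $x>0$, $y\ge 0$, the generalized Marcum $Q$-function is $Q_{\mu}(x,y)=x^{\frac12(1-\mu)}\int_y^{\infty} t^{\frac12(\mu-1)}e^{-t-x}I_{\mu-1}(2\sqrt{xt})\,dt$, where $I_\nu$ is the modified Bessel function of the first kind; at $x=0$ it is defined by continuity, $Q_\mu(0,y)=\Gamma(\mu,y)/\Gamma(\mu)$ (the regularized upper incomplete gamma function), and derivatives at $x=0$ are one-sided. *)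

From Stdlib Require Import Reals.
From Coquelicot Require Import Coquelicot.
Open Scope R_scope.

Definition Gamma (s : R) : R :=
  RInt_gen (fun t => Rpower t (s - 1) * exp (- t)) (at_right 0) (Rbar_locally p_infty).

Fixpoint poch (s : R) (n : nat) : R :=
  match n with
  | O => 1
  | S m => poch s m * (s + INR m)
  end.

(* Reciprocal Gamma 1/Gamma(s), an entire function: for n = max(0, ceil-ish(-s))
   with s + n > 0, 1/Gamma(s) = s(s+1)...(s+n-1) / Gamma(s+n).
   In particular it is 1/Gamma(s) for s > 0 and 0 at s = 0, -1, -2, ... *)
Definition rgamma (s : R) : R :=
  let n := Z.to_nat (up (- s)) in poch s n / Gamma (s + INR n).

Definition upper_gamma (a y : R) : R :=
  RInt_gen (fun t => Rpower t (a - 1) * exp (- t)) (at_point y) (Rbar_locally p_infty).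

Definition besselI (nu z : R) : R :=
  Series (fun k => Rpower (z / 2) (2 * INR k + nu) / INR (Factorial.fact k) * rgamma (INR k + nu + 1)).

(* Generalized Marcum Q-function, for x >= 0, y > 0; at x = 0 (continuity)
   Q_mu(0,y) = Gamma(mu,y)/Gamma(mu).  (Values at x < 0 are irrelevant.) *)
Definition MarcumQ (mu x y : R) : R :=
  if Rlt_dec 0 x then
    Rpower x ((1 - mu) / 2) *
    RInt_gen (fun t => Rpower t ((mu - 1) / 2) * exp (- t - x)
                          * besselI (mu - 1) (2 * sqrt (x * t)))
             (at_point y) (Rbar_locally p_infty)
  else upper_gamma mu y * rgamma mu.

Definition is_derive_nonneg (f : R -> R) (x l : R) : Prop :=
  filterlim (fun h => (f (x + h) - f x) / h)
    (within (fun h => h <> 0 /\ 0 <= x + h) (locally 0)) (locally l).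

(** Expanding the Bessel function and integrating termwise gives
    [Q_mu(x,y) = e^(-x) sum_k x^k/k! P_k] with [P_k = Q_(mu+k)(0,y)] the regularized
    upper incomplete gamma function, and [P_(k+1) - P_k = e^(-y) y^(mu+k) / Gamma(mu+k+1)].
    Differentiating this power series in [x] gives
    [Q' = e^(-x) e^(-y) y^mu f_mu(xy)] and [Q'' = e^(-x) e^(-y) y^mu (y f_(mu+1)(xy) - f_mu(xy))],
    where [f_s(u) = sum_n u^n / (n! Gamma(s+n+1))].  By the recurrence
    [f_s = (s+1) f_(s+1) + u f_(s+2)] the sign of [Q''] is that of
    [(y - mu - 1) F - u G] with [F = f_(mu+1)(u)], [G = f_(mu+2)(u)], [u = xy].
    Part (i) is then immediate; (ii) and (iii) follow from the Turan-type inequalities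
    [Phi = F^2 - (mu+1) F G - u G^2 > 0] and
    [Lambda = (mu+1-2u) F^2 + (2mu+3) u F G + 2u^2 G^2 > 0]: both hold at [u = 0], the
    recurrences give [(u^(mu+1) Phi)' = u^mu (u G^2 + (mu+1) F G) > 0] and
    [Lambda' = (2mu+1) Phi]. *)

From Stdlib Require Import Reals Lra Lia Factorial.
From Coquelicot Require Import Coquelicot.
Open Scope R_scope.

(** * Improper integrals of nonnegative functions *)

Lemma RInt_Chasles_le_r (f : R -> R) (a b c : R) :
  b <= c -> ex_RInt f a b -> ex_RInt f b c ->
  (forall t, b <= t <= c -> 0 <= f t) -> RInt f a b <= RInt f a c.
Proof.
intros Hbc Hab Hbc' Hf.
rewrite <- (RInt_Chasles f a b c) by assumption.
assert (0 <= RInt f b c) by (apply RInt_ge_0; auto; intros; apply Hf; lra).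
change (plus ?u ?v) with (u + v); lra.
Qed.

Lemma RInt_Chasles_le_l (f : R -> R) (a b c : R) :
  a <= b -> ex_RInt f a b -> ex_RInt f b c ->
  (forall t, a <= t <= b -> 0 <= f t) -> RInt f b c <= RInt f a c.
Proof.
intros Hab Hab' Hbc Hf.
rewrite <- (RInt_Chasles f a b c) by assumption.
assert (0 <= RInt f a b) by (apply RInt_ge_0; auto; intros; apply Hf; lra).
change (plus ?u ?v) with (u + v); lra.
Qed.

Lemma filterlim_bounded_nondecr (F : (R -> Prop) -> Prop) (D : R -> Prop) (g : R -> R) (M : R) :
  Filter F -> (exists b, D b) -> (forall b, D b -> g b <= M) ->
  (forall b, D b -> F (fun c => D c /\ g b <= g c)) ->
  exists l, filterlim g F (locally l) /\ forall b, D b -> g b <= l.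
Proof.
intros HF [b0 Hb0] HM Hmono.
set (E := fun v => exists b, D b /\ v = g b).
destruct (completeness E) as [l [Hub Hlub]].
{ exists M; intros v [b [Hb ->]]; auto. }
{ exists (g b0), b0; auto. }
assert (Hle : forall b, D b -> g b <= l) by (intros b Hb; apply Hub; exists b; auto).
exists l; split; [|exact Hle].
intros P [eps HP].
assert (Hclose : exists b, D b /\ l - eps < g b).
{ apply Classical_Prop.NNPP; intros Hn.
  assert (Hl : l <= l - eps).
  { apply Hlub; intros v [b [Hb ->]].
    apply Rnot_lt_le; intros Hlt; apply Hn; exists b; auto. }
  destruct eps; simpl in *; lra. }
destruct Hclose as [b [Hb Hgb]].
change (F (fun c => P (g c))).
apply (filter_imp (fun c => D c /\ g b <= g c)); [|exact (Hmono b Hb)].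
intros c [Hc Hbc]; specialize (Hle c Hc).
apply HP; change (Rabs (g c - l) < eps); apply Rabs_def1; lra.
Qed.

Lemma is_RInt_gen_at_point_l (f : R -> R) (a l : R) (Fb : (R -> Prop) -> Prop) :
  Filter Fb -> Fb (fun b => ex_RInt f a b) ->
  filterlim (fun b => RInt f a b) Fb (locally l) ->
  is_RInt_gen f (at_point a) Fb l.
Proof.
intros HF Hex Hlim P HP.
apply Filter_prod with (fun u => u = a) (fun b => ex_RInt f a b /\ P (RInt f a b)).
- reflexivity.
- apply filter_and; [exact Hex|exact (Hlim P HP)].
- intros u v -> [Hv HPv]; exists (RInt f a v); split; [exact (RInt_correct f a v Hv)|exact HPv].
Qed.

Lemma is_RInt_gen_at_point_r (f : R -> R) (b l : R) (Fa : (R -> Prop) -> Prop) :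
  Filter Fa -> Fa (fun a => ex_RInt f a b) ->
  filterlim (fun a => RInt f a b) Fa (locally l) ->
  is_RInt_gen f Fa (at_point b) l.
Proof.
intros HF Hex Hlim P HP.
apply Filter_prod with (fun a => ex_RInt f a b /\ P (RInt f a b)) (fun v => v = b).
- apply filter_and; [exact Hex|exact (Hlim P HP)].
- reflexivity.
- intros u v [Hu HPu] Hv; subst v; exists (RInt f u b); split; [exact (RInt_correct f u b Hu)|exact HPu].
Qed.

Lemma filterlim_RInt_at_point_l (f : R -> R) (a l : R) (Fb : (R -> Prop) -> Prop) :
  Filter Fb -> is_RInt_gen f (at_point a) Fb l ->
  filterlim (fun b => RInt f a b) Fb (locally l).
Proof.
intros HF H P HP; destruct (H P HP) as [Q R' HQ HR Hqr].
change (Fb (fun b => P (RInt f a b))).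
apply (filter_imp R'); [intros v Hv|exact HR].
destruct (Hqr a v HQ Hv) as [z [Hz Pz]].
simpl in Hz; rewrite (is_RInt_unique _ _ _ _ Hz); exact Pz.
Qed.

Lemma is_RInt_gen_p_infty_nonneg (f : R -> R) (a M : R) :
  (forall t, a <= t -> 0 <= f t) -> (forall b, a <= b -> ex_RInt f a b) ->
  (forall b, a <= b -> RInt f a b <= M) ->
  exists l, is_RInt_gen f (at_point a) (Rbar_locally p_infty) l.
Proof.
intros Hf Hex HM.
destruct (filterlim_bounded_nondecr (Rbar_locally p_infty) (fun b => a <= b)
           (fun b => RInt f a b) M) as [l [Hl _]].
- exact _.
- exists a; lra.
- exact HM.
- intros b Hb; exists b; intros c Hc; split; [lra|].
  apply RInt_Chasles_le_r; auto; [lra| |intros; apply Hf; lra].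
  apply (ex_RInt_Chasles_2 f a); [lra|apply Hex; lra].
- exists l; apply is_RInt_gen_at_point_l; [exact _| |exact Hl].
  exists a; intros b Hb; apply Hex; lra.
Qed.

Lemma RInt_le_is_RInt_gen_p_infty (f : R -> R) (a l : R) :
  (forall t, a <= t -> 0 <= f t) -> (forall b, a <= b -> ex_RInt f a b) ->
  is_RInt_gen f (at_point a) (Rbar_locally p_infty) l ->
  forall b, a <= b -> RInt f a b <= l.
Proof.
intros Hf Hex Hl b Hb.
change (Rbar_le (RInt f a b) l).
apply (is_lim_le_loc (fun _ => RInt f a b) (RInt f a) p_infty); [|apply is_lim_const|].
- exists b; intros c Hc; apply RInt_Chasles_le_r; [lra|apply Hex, Hb| |intros; apply Hf; lra].
  apply (ex_RInt_Chasles_2 (V := R_CompleteNormedModule) f a); [lra|apply Hex; lra].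
- apply (filterlim_RInt_at_point_l f a l); [exact _|exact Hl].
Qed.

Lemma is_RInt_gen_at_right_0_nonneg (f : R -> R) (b M : R) :
  0 < b -> (forall t, 0 < t <= b -> 0 <= f t) -> (forall e, 0 < e <= b -> ex_RInt f e b) ->
  (forall e, 0 < e <= b -> RInt f e b <= M) ->
  exists l, is_RInt_gen f (at_right 0) (at_point b) l /\ 0 <= l.
Proof.
intros Hb Hf Hex HM.
destruct (filterlim_bounded_nondecr (at_right 0) (fun e => 0 < e <= b)
           (fun e => RInt f e b) M) as [l [Hl Hle]].
- exact _.
- exists b; lra.
- exact HM.
- intros e He; exists (mkposreal e (proj1 He)); intros c Hc Hc0.
  change (Rabs (c - 0) < e) in Hc; apply Rabs_def2 in Hc.
  split; [lra|].
  apply RInt_Chasles_le_l; [lra| |apply Hex; lra|intros; apply Hf; lra].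
  apply (ex_RInt_Chasles_1 f c e b); [lra|apply Hex; lra].
- exists l; split.
  + apply is_RInt_gen_at_point_r; [exact _| |exact Hl].
    exists (mkposreal b Hb); intros c Hc Hc0.
    change (Rabs (c - 0) < b) in Hc; apply Rabs_def2 in Hc; apply Hex; lra.
  + apply Rle_trans with (RInt f b b); [rewrite RInt_point; apply Rle_refl|apply Hle; lra].
Qed.

(** * The Gamma function *)

Lemma exp_le_compat x y : x <= y -> exp x <= exp y.
Proof. intros [Hlt| ->]; [left; apply exp_increasing|]; lra. Qed.

Lemma is_lim_Rpower_exp_p_infty (a c : R) : 0 < c ->
  is_lim (fun t => Rpower t a * exp (- (c * t))) p_infty 0.
Proof.
intros Hc.
apply (is_lim_ext_loc (fun t => exp (t * (a * (ln t / t) - c)))).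
{ exists 0; intros t Ht; unfold Rpower; rewrite <- exp_plus; f_equal; field; lra. }
apply (is_lim_comp exp _ p_infty 0 m_infty); [exact is_lim_exp_m| |].
- assert (Hm : Rbar_mult p_infty (a * 0 - c) = m_infty).
  { unfold Rbar_mult, Rbar_mult'; destruct (Rle_dec 0 (a * 0 - c)); [exfalso; lra|reflexivity]. }
  rewrite <- Hm; apply is_lim_mult; [apply is_lim_id| |simpl; lra].
  apply (is_lim_minus _ _ _ (a * 0) c); [apply (is_lim_scal_l _ a _ 0), is_lim_div_ln_p|apply is_lim_const|].
  reflexivity.
- exists 0; intros; discriminate.
Qed.

Lemma filterlim_Rpower_exp_at_right_0 (a : R) : 0 < a ->
  filterlim (fun t => Rpower t a * exp (- t)) (at_right 0) (locally 0).
Proof.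
intros Ha P [eps HP].
assert (Hd : 0 < Rpower eps (/ a)) by apply exp_pos.
exists (mkposreal _ Hd); intros t Ht Ht0; apply HP.
change (Rabs (t - 0) < Rpower eps (/ a)) in Ht; apply Rabs_def2 in Ht.
change (Rabs (Rpower t a * exp (- t) - 0) < eps).
assert (Hlt : Rpower t a < eps).
{ rewrite <- (Rpower_1 eps) by apply cond_pos.
  rewrite <- (Rinv_l a), <- Rpower_mult by lra.
  apply Rlt_Rpower_l; lra. }
assert (0 < Rpower t a) by apply exp_pos.
assert (exp (- t) < 1) by (rewrite <- exp_0; apply exp_increasing; lra).
assert (0 < exp (- t)) by apply exp_pos.
rewrite Rminus_0_r, Rabs_pos_eq by nra; nra.
Qed.

Definition gamma_integrand (a t : R) := Rpower t (a - 1) * exp (- t).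

Lemma gamma_integrand_pos a t : 0 < gamma_integrand a t.
Proof. apply Rmult_lt_0_compat; apply exp_pos. Qed.

Lemma continuous_gamma_integrand a t : 0 < t -> continuous (gamma_integrand a) t.
Proof.
intros Ht; apply (ex_derive_continuous (gamma_integrand a)).
unfold gamma_integrand, Rpower; auto_derive; lra.
Qed.

Lemma ex_RInt_gamma_integrand a u v : 0 < u <= v -> ex_RInt (gamma_integrand a) u v.
Proof.
intros Huv; apply (ex_RInt_continuous (V := R_CompleteNormedModule)).
intros t Ht; rewrite Rmin_left in Ht by lra; apply continuous_gamma_integrand; lra.
Qed.

Lemma gamma_integrand_le_exp_half a :
  exists T, forall t, T <= t -> gamma_integrand a t <= exp (- (t / 2)).
Proof.
destruct (is_lim_Rpower_exp_p_infty (a - 1) (1 / 2) ltac:(lra) (fun z => z < 1)) as [T HT].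
{ exists (mkposreal 1 Rlt_0_1); intros z Hz; change (Rabs (z - 0) < 1) in Hz.
  apply Rabs_def2 in Hz; lra. }
exists (Rmax T 0 + 1); intros t Ht.
assert (Hlt := HT t ltac:(generalize (Rmax_l T 0); lra)).
unfold gamma_integrand.
replace (exp (- t)) with (exp (- (1 / 2 * t)) * exp (- (t / 2))) by (rewrite <- exp_plus; f_equal; field).
assert (0 < exp (- (t / 2))) by apply exp_pos.
rewrite <- Rmult_assoc; rewrite <- (Rmult_1_l (exp (- (t / 2)))) at 2.
apply Rmult_le_compat_r; lra.
Qed.

Lemma RInt_exp_half_le_2 (T b : R) : 0 <= T <= b -> RInt (fun t => exp (- (t / 2))) T b <= 2.
Proof.
intros HTb.
rewrite (is_RInt_unique _ T b (2 * exp (- (T / 2)) - 2 * exp (- (b / 2)))).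
- assert (exp (- (T / 2)) <= 1) by (rewrite <- exp_0; apply exp_le_compat; lra).
  assert (0 < exp (- (b / 2))) by apply exp_pos; lra.
- replace (2 * exp (- (T / 2)) - 2 * exp (- (b / 2)))
    with ((fun t => -2 * exp (- (t / 2))) b - (fun t => -2 * exp (- (t / 2))) T) by (simpl; ring).
  apply (is_RInt_derive (fun t => -2 * exp (- (t / 2)))).
  + intros t _; auto_derive; auto; change RinvImpl.Rinv with Rinv; unfold Rdiv; field.
  + intros t _; apply (ex_derive_continuous (fun t => exp (- (t / 2)))); auto_derive; auto.
Qed.

Lemma Rpower_minus_1 t c : 0 < t -> Rpower t (c - 1) = Rpower t c / t.
Proof. intros Ht; unfold Rminus; rewrite Rpower_plus, Rpower_Ropp, Rpower_1 by lra; reflexivity. Qed.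

Lemma upper_gamma_correct a y : 0 < y ->
  is_RInt_gen (gamma_integrand a) (at_point y) (Rbar_locally p_infty) (upper_gamma a y).
Proof.
intros Hy.
destruct (gamma_integrand_le_exp_half a) as [T HT].
set (T0 := Rmax y T).
assert (HyT0 : y <= T0) by apply Rmax_l.
assert (HTT0 : T <= T0) by apply Rmax_r.
destruct (is_RInt_gen_p_infty_nonneg (gamma_integrand a) y (RInt (gamma_integrand a) y T0 + 2))
  as [l Hl].
- intros t _; left; apply gamma_integrand_pos.
- intros b Hb; apply ex_RInt_gamma_integrand; lra.
- intros b Hb; destruct (Rle_lt_dec b T0) as [HbT0|HT0b].
  + assert (RInt (gamma_integrand a) y b <= RInt (gamma_integrand a) y T0).
    { apply RInt_Chasles_le_r; try apply ex_RInt_gamma_integrand; try lra.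
      intros; left; apply gamma_integrand_pos. }
    lra.
  + rewrite <- (RInt_Chasles _ y T0 b) by (apply ex_RInt_gamma_integrand; lra).
    change (plus ?u ?v) with (u + v).
    assert (RInt (gamma_integrand a) T0 b <= RInt (fun t => exp (- (t / 2))) T0 b).
    { apply RInt_le; [lra|apply ex_RInt_gamma_integrand; lra| |intros t Ht; apply HT; lra].
      apply (ex_RInt_continuous (V := R_CompleteNormedModule)); intros t _.
      apply (ex_derive_continuous (fun t => exp (- (t / 2)))); auto_derive; auto. }
    assert (RInt (fun t => exp (- (t / 2))) T0 b <= 2) by (apply RInt_exp_half_le_2; lra).
    lra.
- replace (upper_gamma a y) with l by (symmetry; exact (is_RInt_gen_unique _ _ Hl)).
  exact Hl.
Qed.

Lemma RInt_le_upper_gamma a y b : 0 < y -> y <= b -> RInt (gamma_integrand a) y b <= upper_gamma a y.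
Proof.
intros Hy Hb; apply (RInt_le_is_RInt_gen_p_infty _ y); [| |apply upper_gamma_correct, Hy|exact Hb].
- intros; left; apply gamma_integrand_pos.
- intros c Hc; apply ex_RInt_gamma_integrand; lra.
Qed.

Lemma upper_gamma_nonneg a y : 0 < y -> 0 <= upper_gamma a y.
Proof.
intros Hy; apply Rle_trans with (RInt (gamma_integrand a) y y).
- rewrite RInt_point; apply Rle_refl.
- apply RInt_le_upper_gamma; lra.
Qed.

Lemma is_RInt_gen_gamma_integrand_0 s b : 0 < s -> 0 < b ->
  exists l, is_RInt_gen (gamma_integrand s) (at_right 0) (at_point b) l /\ 0 <= l.
Proof.
intros Hs Hb.
apply (is_RInt_gen_at_right_0_nonneg _ b (Rpower b s / s)); [exact Hb| | |].
- intros t _; left; apply gamma_integrand_pos.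
- intros e He; apply ex_RInt_gamma_integrand; lra.
- intros e He.
  apply Rle_trans with (Rpower b s / s - Rpower e s / s).
  + apply (is_RInt_le (gamma_integrand s) (fun t => Rpower t (s - 1)) e b); [lra| | |].
    * apply (RInt_correct (gamma_integrand s)); apply ex_RInt_gamma_integrand; lra.
    * apply (is_RInt_derive (fun t => Rpower t s / s)).
      -- intros t Ht; rewrite Rmin_left in Ht by lra.
         unfold Rpower; auto_derive; [lra|]; change RinvImpl.Rinv with Rinv.
         fold (Rpower t s) (Rpower t (s - 1)); rewrite Rpower_minus_1 by lra.
         field; lra.
      -- intros t Ht; rewrite Rmin_left in Ht by lra.
         apply (ex_derive_continuous (fun t => Rpower t (s - 1))); unfold Rpower; auto_derive; lra.
    * intros t Ht; unfold gamma_integrand.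
      assert (0 < Rpower t (s - 1)) by apply exp_pos.
      assert (exp (- t) < 1) by (rewrite <- exp_0; apply exp_increasing; lra).
      nra.
  + assert (0 < Rpower e s / s) by (apply Rdiv_lt_0_compat; [apply exp_pos|lra]); lra.
Qed.

Lemma Gamma_split s y : 0 < s -> 0 < y -> exists l, 0 <= l /\
  is_RInt_gen (gamma_integrand s) (at_right 0) (Rbar_locally p_infty) (l + upper_gamma s y).
Proof.
intros Hs Hy; destruct (is_RInt_gen_gamma_integrand_0 s y Hs Hy) as [l [Hl Hl0]].
exists l; split; [exact Hl0|].
exact (is_RInt_gen_Chasles _ y _ _ Hl (upper_gamma_correct s y Hy)).
Qed.

Lemma Gamma_correct s : 0 < s ->
  is_RInt_gen (gamma_integrand s) (at_right 0) (Rbar_locally p_infty) (Gamma s).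
Proof.
intros Hs; destruct (Gamma_split s 1 Hs Rlt_0_1) as [l [_ Hl]].
replace (Gamma s) with (l + upper_gamma s 1) by (symmetry; exact (is_RInt_gen_unique _ _ Hl)).
exact Hl.
Qed.

Lemma upper_gamma_le_Gamma s y : 0 < s -> 0 < y -> upper_gamma s y <= Gamma s.
Proof.
intros Hs Hy; destruct (Gamma_split s y Hs Hy) as [l [Hl0 Hl]].
replace (Gamma s) with (l + upper_gamma s y) by (symmetry; exact (is_RInt_gen_unique _ _ Hl)).
lra.
Qed.

Lemma Gamma_pos s : 0 < s -> 0 < Gamma s.
Proof.
intros Hs.
assert (0 < RInt (gamma_integrand s) 1 2).
{ apply RInt_gt_0; [lra|intros; apply gamma_integrand_pos|].
  intros t Ht; apply continuous_gamma_integrand; lra. }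
assert (RInt (gamma_integrand s) 1 2 <= upper_gamma s 1) by (apply RInt_le_upper_gamma; lra).
assert (upper_gamma s 1 <= Gamma s) by (apply upper_gamma_le_Gamma; lra).
lra.
Qed.

Definition gamma_primitive (a t : R) := Rpower t a * exp (- t).

Lemma is_derive_gamma_primitive a t : 0 < t ->
  is_derive (gamma_primitive a) t (a * gamma_integrand a t - gamma_integrand (a + 1) t).
Proof.
intros Ht; unfold gamma_primitive, gamma_integrand, Rpower; auto_derive; [lra|].
change RinvImpl.Rinv with Rinv; replace (a + 1 - 1) with a by ring.
fold (Rpower t a) (Rpower t (a - 1)); rewrite Rpower_minus_1 by lra.
field; lra.
Qed.

Lemma filter_prod_Rmin_pos (Fa : (R -> Prop) -> Prop) : Fa (fun u => 0 < u) ->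
  filter_prod Fa (Rbar_locally p_infty) (fun ab => 0 < Rmin (fst ab) (snd ab)).
Proof.
intros HF; apply Filter_prod with (fun u => 0 < u) (fun v => 0 < v); [exact HF|exists 0; auto|].
intros u v Hu Hv; apply Rmin_glb_lt; assumption.
Qed.

Lemma is_RInt_gen_gamma_integrand_S (Fa : (R -> Prop) -> Prop) (a la I : R) :
  Filter Fa -> Fa (fun u => 0 < u) ->
  filterlim (gamma_primitive a) Fa (locally la) ->
  is_RInt_gen (gamma_integrand a) Fa (Rbar_locally p_infty) I ->
  is_RInt_gen (gamma_integrand (a + 1)) Fa (Rbar_locally p_infty) (a * I + la).
Proof.
intros HF Hpos Hla HI.
assert (Hev : forall P : R -> Prop, (forall x, 0 < x -> P x) ->
  filter_prod Fa (Rbar_locally p_infty)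
    (fun ab => forall x, Rmin (fst ab) (snd ab) <= x <= Rmax (fst ab) (snd ab) -> P x)).
{ intros P HP; apply (filter_imp (fun ab => 0 < Rmin (fst ab) (snd ab))).
  - intros ab Hab x Hx; apply HP; lra.
  - apply filter_prod_Rmin_pos, Hpos. }
assert (HD : is_RInt_gen (Derive (gamma_primitive a)) Fa (Rbar_locally p_infty) (0 - la)).
{ apply is_RInt_gen_Derive; [| |exact Hla|].
  - apply Hev; intros x Hx; eexists; apply is_derive_gamma_primitive, Hx.
  - apply Hev; intros x Hx.
    apply (continuous_ext_loc _ (fun t => a * gamma_integrand a t - gamma_integrand (a + 1) t)).
    + exists (mkposreal x Hx); intros t Ht; change (Rabs (t - x) < x) in Ht; apply Rabs_def2 in Ht.
      symmetry; apply is_derive_unique, is_derive_gamma_primitive; lra.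
    + apply (ex_derive_continuous (fun t => a * gamma_integrand a t - gamma_integrand (a + 1) t)).
      unfold gamma_integrand, Rpower; auto_derive; lra.
  - apply (is_lim_ext (fun t => Rpower t a * exp (- (1 * t))) _ p_infty 0).
    + intros t; unfold gamma_primitive; rewrite Rmult_1_l; reflexivity.
    + exact (is_lim_Rpower_exp_p_infty a 1 Rlt_0_1). }
assert (H := is_RInt_gen_minus _ _ _ _ (is_RInt_gen_scal _ a _ HI) HD).
apply (is_RInt_gen_ext (fun t => minus (scal a (gamma_integrand a t)) (Derive (gamma_primitive a) t))).
- apply (filter_imp (fun ab => 0 < Rmin (fst ab) (snd ab))); [|apply filter_prod_Rmin_pos, Hpos].
  intros ab Hab x Hx; rewrite (is_derive_unique _ _ _ (is_derive_gamma_primitive a x ltac:(lra))).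
  change (a * gamma_integrand a x - (a * gamma_integrand a x - gamma_integrand (a + 1) x)
    = gamma_integrand (a + 1) x); ring.
- replace (a * I + la) with (minus (scal a I) (0 - la)); [exact H|].
  change (a * I - (0 - la) = a * I + la); ring.
Qed.

Lemma Gamma_S s : 0 < s -> Gamma (s + 1) = s * Gamma s.
Proof.
intros Hs; rewrite <- (Rplus_0_r (s * Gamma s)).
apply is_RInt_gen_unique, is_RInt_gen_gamma_integrand_S; [exact _| |apply filterlim_Rpower_exp_at_right_0, Hs|apply Gamma_correct, Hs].
exists (mkposreal 1 Rlt_0_1); intros t _ Ht; exact Ht.
Qed.

Lemma upper_gamma_S a y : 0 < y ->
  upper_gamma (a + 1) y = a * upper_gamma a y + Rpower y a * exp (- y).
Proof.
intros Hy; apply is_RInt_gen_unique, is_RInt_gen_gamma_integrand_S; [exact _|exact Hy| |apply upper_gamma_correct, Hy].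
intros P HP; exact (locally_singleton _ _ HP).
Qed.

Lemma rgamma_eq_inv_Gamma s : 0 < s -> rgamma s = / Gamma s.
Proof.
intros Hs; unfold rgamma; cbv zeta.
replace (Z.to_nat (up (- s))) with 0%nat.
- simpl; rewrite Rplus_0_r; unfold Rdiv; ring.
- destruct (archimed (- s)) as [H1 H2].
  assert (Hz : (up (- s) < 1)%Z) by (apply lt_IZR; lra); lia.
Qed.

Lemma rgamma_0 : rgamma 0 = 0.
Proof.
unfold rgamma; cbv zeta; rewrite Ropp_0.
replace (up 0) with 1%Z.
- simpl; unfold Rdiv; ring.
- destruct (archimed 0) as [H1 H2]; apply Z.le_antisymm; [apply lt_IZR in H1; lia|apply le_IZR; lra].
Qed.

Lemma rgamma_pos s : 0 < s -> 0 < rgamma s.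
Proof. intros Hs; rewrite rgamma_eq_inv_Gamma by exact Hs; apply Rinv_0_lt_compat, Gamma_pos, Hs. Qed.

Lemma rgamma_nonneg s : 0 <= s -> 0 <= rgamma s.
Proof. intros [Hs| <-]; [left; apply rgamma_pos, Hs|rewrite rgamma_0; lra]. Qed.

Lemma rgamma_S s : 0 <= s -> rgamma s = s * rgamma (s + 1).
Proof.
intros [Hs| <-]; [|rewrite rgamma_0; ring].
rewrite !rgamma_eq_inv_Gamma, Gamma_S by lra.
assert (0 < Gamma s) by (apply Gamma_pos, Hs); field; lra.
Qed.

Lemma rgamma_S_le a : 1 <= a -> rgamma (a + 1) <= rgamma a.
Proof.
intros Ha; rewrite (rgamma_S a) by lra.
assert (0 <= rgamma (a + 1)) by (apply rgamma_nonneg; lra); nra.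
Qed.

Lemma rgamma_plus_INR_le s k : 0 <= s -> rgamma (s + INR k) <= rgamma s + rgamma (s + 1).
Proof.
intros Hs.
assert (Hnonneg : forall j, 0 <= rgamma (s + INR j)) by (intros j; apply rgamma_nonneg; generalize (pos_INR j); lra).
assert (Hdecr : forall j, rgamma (s + 1 + INR j) <= rgamma (s + 1)).
{ induction j as [|j IH]; [rewrite Rplus_0_r; lra|].
  rewrite S_INR, <- Rplus_assoc; eapply Rle_trans; [|exact IH].
  apply rgamma_S_le; generalize (pos_INR j); lra. }
destruct k as [|k]; [rewrite Rplus_0_r; specialize (Hnonneg 1%nat); simpl in Hnonneg; lra|].
rewrite S_INR, (Rplus_comm (INR k)), <- Rplus_assoc.
specialize (Hdecr k); specialize (Hnonneg 0%nat); rewrite Rplus_0_r in Hnonneg; lra.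
Qed.

Definition reg_upper_gamma (a y : R) := rgamma a * upper_gamma a y.

Lemma reg_upper_gamma_bounds a y : 0 <= a -> 0 < y -> 0 <= reg_upper_gamma a y <= 1.
Proof.
intros Ha Hy; unfold reg_upper_gamma.
assert (HU := upper_gamma_nonneg a y Hy).
split; [apply Rmult_le_pos; [apply rgamma_nonneg|]; assumption|].
destruct Ha as [Ha| <-]; [|rewrite rgamma_0; lra].
rewrite rgamma_eq_inv_Gamma by exact Ha.
assert (HG := Gamma_pos a Ha); assert (HUG := upper_gamma_le_Gamma a y Ha Hy).
apply (Rmult_le_reg_l (Gamma a)); [exact HG|].
rewrite <- Rmult_assoc, Rinv_r by lra; lra.
Qed.

Lemma reg_upper_gamma_S a y : 0 <= a -> 0 < y ->
  reg_upper_gamma (a + 1) y = reg_upper_gamma a y + exp (- y) * Rpower y a * rgamma (a + 1).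
Proof.
intros Ha Hy; unfold reg_upper_gamma.
rewrite upper_gamma_S, (rgamma_S a) by assumption; ring.
Qed.

(** * Termwise integration of series *)

Lemma sum_n_le_Series (c : nat -> R) n :
  (forall k, 0 <= c k) -> ex_series c -> sum_n c n <= Series c.
Proof.
intros Hc Hex; rewrite sum_n_Reals; apply sum_incr; [|exact Hc].
apply is_series_Reals, Series_correct, Hex.
Qed.

Lemma sum_n_minus_R (u v : nat -> R) n : sum_n (fun k => u k - v k) n = sum_n u n - sum_n v n.
Proof. rewrite !sum_n_Reals; apply minus_sum. Qed.

Lemma Series_minus_sum_n_le (a M : nat -> R) n :
  (forall k, Rabs (a k) <= M k) -> ex_series M ->
  Rabs (Series a - sum_n a n) <= Series M - sum_n M n.
Proof.
intros Ha HM.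
assert (Hexa : ex_series a) by exact (ex_series_le a M Ha HM).
assert (Hab : forall k, - M k <= a k <= M k) by (intros k; apply Rabs_le_between, Ha).
assert (H1 : sum_n (fun k => M k - a k) n <= Series (fun k => M k - a k)).
{ apply sum_n_le_Series; [intros k; specialize (Hab k); lra|exact (ex_series_minus M a HM Hexa)]. }
assert (H2 : sum_n (fun k => M k + a k) n <= Series (fun k => M k + a k)).
{ apply sum_n_le_Series; [intros k; specialize (Hab k); lra|exact (ex_series_plus M a HM Hexa)]. }
rewrite Series_minus, sum_n_minus_R in H1 by assumption.
rewrite Series_plus, sum_n_Reals, plus_sum, <- !sum_n_Reals in H2 by assumption.
apply Rabs_le; lra.
Qed.

Lemma is_series_exp r : is_series (fun k => r ^ k / INR (fact k)) (exp r).
Proof.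
eapply is_series_ext; [|exact (is_exp_Reals r)]; intros n; simpl.
rewrite pow_n_pow; change (scal ?u ?v) with (u * v); unfold Rdiv; ring.
Qed.

Lemma INR_fact_pos n : 0 < INR (fact n).
Proof. apply lt_0_INR, lt_O_fact. Qed.

Lemma exp_term_nonneg r n : 0 <= r -> 0 <= r ^ n / INR (fact n).
Proof. intros Hr; apply Rdiv_le_0_compat; [apply pow_le, Hr|apply INR_fact_pos]. Qed.

Lemma exp_term_le_exp r n : 0 <= r -> r ^ n / INR (fact n) <= exp r.
Proof.
intros Hr; eapply Rle_trans; [|apply exp_ge_taylor with (n := n), Hr].
destruct n as [|n]; [apply Rle_refl|rewrite tech5].
assert (0 <= sum_f_R0 (fun k => r ^ k / INR (fact k)) n) by (apply cond_pos_sum; intros; apply exp_term_nonneg, Hr).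
lra.
Qed.

Lemma CV_radius_le_fact (a : nat -> R) (C : R) :
  (forall k, Rabs (a k) <= C / INR (fact k)) -> CV_radius a = p_infty.
Proof.
intros Ha.
assert (HC : 0 <= C).
{ specialize (Ha 0%nat); simpl in Ha; generalize (Rabs_pos (a 0%nat)); lra. }
assert (Hall : forall r : R, Rbar_le r (CV_radius a)).
{ intros r; apply CV_radius_bounded; exists (C * exp (Rabs r)); intros n.
  rewrite Rabs_mult, <- RPow_abs.
  apply Rle_trans with (C * (Rabs r ^ n / INR (fact n))).
  - replace (C * (Rabs r ^ n / INR (fact n))) with (C / INR (fact n) * Rabs r ^ n)
      by (field; apply not_0_INR, fact_neq_0).
    apply Rmult_le_compat_r; [apply pow_le, Rabs_pos|apply Ha].
  - apply Rmult_le_compat_l; [exact HC|apply exp_term_le_exp, Rabs_pos]. }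
destruct (CV_radius a) as [v| |] eqn:E; [|reflexivity|].
- specialize (Hall (v + 1)); simpl in Hall; lra.
- destruct (Hall 0).
Qed.

Lemma is_RInt_sum_n (g : nat -> R -> R) (a b : R) :
  (forall k, ex_RInt (g k) a b) ->
  forall n, is_RInt (fun t => sum_n (fun k => g k t) n) a b (sum_n (fun k => RInt (g k) a b) n).
Proof.
intros Hex n; induction n as [|n IH].
- apply (is_RInt_ext (g 0%nat)); [intros t _; rewrite sum_O; reflexivity|].
  rewrite sum_O; apply (RInt_correct (V := R_CompleteNormedModule)), Hex.
- apply (is_RInt_ext (fun t => plus (sum_n (fun k => g k t) n) (g (S n) t))).
  + intros t _; rewrite sum_Sn; reflexivity.
  + rewrite sum_Sn; apply (is_RInt_plus (V := R_NormedModule)); [exact IH|apply (RInt_correct (V := R_CompleteNormedModule)), Hex].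
Qed.

Lemma filterlim_sum_n_uniform (h : nat -> R -> R) (M : nat -> R) :
  (forall k t, Rabs (h k t) <= M k) -> ex_series M ->
  filterlim (fun n t => sum_n (fun k => h k t) n) eventually
    (locally ((fun t => Series (fun k => h k t)) : fct_UniformSpace R R_CompleteNormedModule)).
Proof.
intros Hh HM P [eps HP].
destruct (Series_correct _ HM (fun z => Rabs (z - Series M) < eps)) as [N HN].
{ exists eps; intros z Hz; exact Hz. }
exists N; intros n Hn; apply HP; intros t.
change (Rabs (sum_n (fun k => h k t) n - Series (fun k => h k t)) < eps).
rewrite Rabs_minus_sym.
eapply Rle_lt_trans; [apply Series_minus_sum_n_le; [intros k; apply Hh|exact HM]|].
specialize (HN n Hn); simpl in HN; rewrite Rabs_minus_sym in HN.
eapply Rle_lt_trans; [apply Rle_abs|exact HN].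
Qed.

Definition clamp (a b t : R) := Rmax a (Rmin b t).

Lemma clamp_id a b t : a <= t <= b -> clamp a b t = t.
Proof. intros Ht; unfold clamp; rewrite Rmin_right, Rmax_right; lra. Qed.

Lemma clamp_between a b t : a <= b -> a <= clamp a b t <= b.
Proof. intros Hab; unfold clamp; split; [apply Rmax_l|apply Rmax_lub; [lra|apply Rmin_l]]. Qed.

(* [filterlim_RInt] needs uniform convergence on the whole line, hence the clamping. *)
Lemma is_RInt_Series_M_test (g : nat -> R -> R) (a b : R) (M : nat -> R) :
  a <= b -> (forall k, ex_RInt (g k) a b) -> ex_series M ->
  (forall k t, a <= t <= b -> Rabs (g k t) <= M k) ->
  is_RInt (fun t => Series (fun k => g k t)) a b (Series (fun k => RInt (g k) a b)).
Proof.
intros Hab Hex HM Hg.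
set (gc := fun k t => g k (clamp a b t)).
assert (Hon : forall k t, a <= t <= b -> gc k t = g k t) by (intros; unfold gc; rewrite clamp_id; auto).
assert (Hint : forall k, RInt (gc k) a b = RInt (g k) a b).
{ intros k; apply RInt_ext; intros t Ht; rewrite Rmin_left, Rmax_right in Ht by lra; apply Hon; lra. }
assert (Hexc : forall k, ex_RInt (gc k) a b).
{ intros k; apply (ex_RInt_ext (g k)); [intros t Ht; rewrite Rmin_left, Rmax_right in Ht by lra; symmetry; apply Hon; lra|apply Hex]. }
destruct (filterlim_RInt (fun n t => sum_n (fun k => gc k t) n) a b eventually _ _
  (fun n => sum_n (fun k => RInt (gc k) a b) n) (is_RInt_sum_n gc a b Hexc)
  (filterlim_sum_n_uniform gc M (fun k t => Hg k _ (clamp_between a b t Hab)) HM)) as [I [HI HgI]].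
replace (Series (fun k => RInt (g k) a b)) with I.
- apply (is_RInt_ext (fun t => Series (fun k => gc k t))); [|exact HgI].
  intros t Ht; rewrite Rmin_left, Rmax_right in Ht by lra; apply Series_ext; intros k; apply Hon; lra.
- unfold Series; rewrite <- (Lim_seq_ext (fun n => sum_n (fun k => RInt (gc k) a b) n)).
  + rewrite (is_lim_seq_unique _ I HI); reflexivity.
  + intros n; apply sum_n_ext; intros k; apply Hint.
Qed.

Lemma is_lim_sum_n (F : nat -> R -> R) (I : nat -> R) (x : Rbar) :
  (forall k, is_lim (F k) x (I k)) ->
  forall n, is_lim (fun b => sum_n (fun k => F k b) n) x (sum_n I n).
Proof.
intros HF n; induction n as [|n IH].
- apply (is_lim_ext (F 0%nat)); [intros b; rewrite sum_O; reflexivity|rewrite sum_O; apply HF].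
- apply (is_lim_ext (fun b => sum_n (fun k => F k b) n + F (S n) b)).
  + intros b; rewrite sum_Sn; reflexivity.
  + rewrite sum_Sn; apply (is_lim_plus _ _ _ _ _ _ IH (HF (S n))); reflexivity.
Qed.

Lemma is_lim_Series_p_infty (F : nat -> R -> R) (I : nat -> R) (y : R) :
  (forall k b, y <= b -> 0 <= F k b <= I k) -> ex_series I ->
  (forall k, is_lim (F k) p_infty (I k)) ->
  is_lim (fun b => Series (fun k => F k b)) p_infty (Series I).
Proof.
intros HF HI Hlim P [eps HP].
assert (He2 : 0 < eps / 2) by (generalize (cond_pos eps); lra).
destruct (Series_correct _ HI (fun z => Rabs (z - Series I) < eps / 2)) as [N HN].
{ exists (mkposreal _ He2); intros z Hz; exact Hz. }
specialize (HN N (le_n _)); simpl in HN.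
destruct (is_lim_sum_n F I p_infty Hlim N (fun z => Rabs (z - sum_n I N) < eps / 2)) as [B HB].
{ exists (mkposreal _ He2); intros z Hz; exact Hz. }
exists (Rmax y B); intros b Hb; apply HP.
change (Rabs (Series (fun k => F k b) - Series I) < eps).
assert (Hyb : y <= b) by (generalize (Rmax_l y B); lra).
specialize (HB b ltac:(generalize (Rmax_r y B); lra)).
assert (HexF : ex_series (fun k => F k b)).
{ apply (ex_series_le (fun k => F k b) I); [|exact HI].
  intros k; destruct (HF k b Hyb); change (Rabs (F k b) <= I k); rewrite Rabs_pos_eq; lra. }
assert (H1 := sum_n_le_Series _ N (fun k => proj1 (HF k b Hyb)) HexF).
assert (H2 : Series (fun k => F k b) <= Series I) by (apply Series_le; auto).
apply Rabs_def2 in HN; apply Rabs_def2 in HB.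
rewrite Rabs_minus_sym, Rabs_pos_eq by lra.
change (@sum_n _ ?u ?n) with (@sum_n R_AbelianMonoid u n) in *.
lra.
Qed.

Lemma is_RInt_gen_Series (g : nat -> R -> R) (y : R) (I : nat -> R) :
  (forall k t, y <= t -> 0 <= g k t) ->
  (forall k b, y <= b -> ex_RInt (g k) y b) ->
  (forall k, is_RInt_gen (g k) (at_point y) (Rbar_locally p_infty) (I k)) ->
  ex_series I ->
  (forall b, y <= b -> exists M : nat -> R, ex_series M /\ forall k t, y <= t <= b -> Rabs (g k t) <= M k) ->
  is_RInt_gen (fun t => Series (fun k => g k t)) (at_point y) (Rbar_locally p_infty) (Series I).
Proof.
intros Hg Hex HI HIs HM.
assert (Hle : forall k b, y <= b -> 0 <= RInt (g k) y b <= I k).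
{ intros k b Hb; split.
  - apply RInt_ge_0; [exact Hb|apply Hex, Hb|intros; apply Hg; lra].
  - apply (RInt_le_is_RInt_gen_p_infty (g k) y); [apply Hg|apply Hex|apply HI|exact Hb]. }
apply is_RInt_gen_at_point_l; [exact _|exists y; intros b Hb|].
- destruct (HM b ltac:(lra)) as [M [HMs HMb]].
  eexists; apply (is_RInt_Series_M_test g y b M); auto; [lra|intros; apply Hex; lra].
- apply (filterlim_ext_loc (fun b => Series (fun k => RInt (g k) y b))).
  + exists y; intros b Hb; destruct (HM b ltac:(lra)) as [M [HMs HMb]].
    symmetry; apply is_RInt_unique, (is_RInt_Series_M_test g y b M); auto; [lra|intros; apply Hex; lra].
  + apply (is_lim_Series_p_infty _ I y Hle HIs).
    intros k; apply (filterlim_RInt_at_point_l _ y); [exact _|apply HI].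
Qed.

(** * The Marcum Q-function as a power series *)

Definition marcum_term (mu x : R) (k : nat) (t : R) :=
  x ^ k / INR (fact k) * rgamma (mu + INR k) * gamma_integrand (mu + INR k) t.

Lemma marcum_term_nonneg mu x k t : 0 <= mu -> 0 <= x -> 0 <= marcum_term mu x k t.
Proof.
intros Hmu Hx; unfold marcum_term.
apply Rmult_le_pos; [apply Rmult_le_pos|left; apply gamma_integrand_pos].
- apply exp_term_nonneg, Hx.
- apply rgamma_nonneg; generalize (pos_INR k); lra.
Qed.

Lemma marcum_integrand_eq mu x t : 0 < x -> 0 < t ->
  Rpower t ((mu - 1) / 2) * exp (- t - x) * besselI (mu - 1) (2 * sqrt (x * t))
  = exp (- x) * Rpower x ((mu - 1) / 2) * Series (fun k => marcum_term mu x k t).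
Proof.
intros Hx Ht; unfold besselI; rewrite <- !Series_scal_l; apply Series_ext; intros k.
unfold marcum_term, gamma_integrand.
replace (2 * sqrt (x * t) / 2) with (sqrt (x * t)) by field.
replace (INR k + (mu - 1) + 1) with (mu + INR k) by ring.
rewrite <- (Rpower_pow k x) by lra.
unfold Rpower; rewrite <- Rpower_sqrt, ln_Rpower, ln_mult by nra.
assert (HF : INR (fact k) <> 0) by apply not_0_INR, fact_neq_0.
replace (exp ((mu - 1) / 2 * ln t) * exp (- t - x) *
   (exp ((2 * INR k + (mu - 1)) * (/ 2 * (ln x + ln t))) / INR (fact k) * rgamma (mu + INR k)))
  with (exp ((mu - 1) / 2 * ln t + (- t - x) + (2 * INR k + (mu - 1)) * (/ 2 * (ln x + ln t)))
        * rgamma (mu + INR k) / INR (fact k)) by (rewrite !exp_plus; field; exact HF).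
replace (exp (- x) * exp ((mu - 1) / 2 * ln x) *
   (exp (INR k * ln x) / INR (fact k) * rgamma (mu + INR k) * (exp ((mu + INR k - 1) * ln t) * exp (- t))))
  with (exp (- x + (mu - 1) / 2 * ln x + INR k * ln x + (mu + INR k - 1) * ln t + - t)
        * rgamma (mu + INR k) / INR (fact k)) by (rewrite !exp_plus; field; exact HF).
do 3 f_equal; field.
Qed.

Lemma Rpower_le_ends c y b t : 0 < y <= t -> t <= b -> Rpower t c <= Rpower y c + Rpower b c.
Proof.
intros Hyt Htb; unfold Rpower.
assert (ln y <= ln t) by (apply ln_le; lra).
assert (ln t <= ln b) by (apply ln_le; lra).
assert (H1 := exp_pos (c * ln y)); assert (H2 := exp_pos (c * ln b)).
destruct (Rle_dec 0 c).
- assert (exp (c * ln t) <= exp (c * ln b)) by (apply exp_le_compat; nra); lra.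
- assert (exp (c * ln t) <= exp (c * ln y)) by (apply exp_le_compat; nra); lra.
Qed.

Lemma marcum_term_le mu x y b k t : 0 <= mu -> 0 <= x -> 0 < y <= t -> t <= b ->
  marcum_term mu x k t
  <= (rgamma mu + rgamma (mu + 1)) * (Rpower y (mu - 1) + Rpower b (mu - 1)) * ((x * b) ^ k / INR (fact k)).
Proof.
intros Hmu Hx Hyt Htb; unfold marcum_term, gamma_integrand.
replace (Rpower t (mu + INR k - 1)) with (Rpower t (mu - 1) * t ^ k)
  by (rewrite <- (Rpower_pow k t), <- Rpower_plus by lra; f_equal; ring).
rewrite Rpow_mult_distr.
assert (Hxk := exp_term_nonneg x k Hx).
assert (Hr := rgamma_plus_INR_le mu k Hmu).
assert (Hr0 : 0 <= rgamma (mu + INR k)) by (apply rgamma_nonneg; generalize (pos_INR k); lra).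
assert (Hp := Rpower_le_ends (mu - 1) y b t Hyt Htb).
assert (Hp0 : 0 < Rpower t (mu - 1)) by apply exp_pos.
assert (Htk : t ^ k <= b ^ k) by (apply pow_incr; lra).
assert (Htk0 : 0 <= t ^ k) by (apply pow_le; lra).
assert (He : exp (- t) <= 1) by (rewrite <- exp_0; apply exp_le_compat; lra).
assert (He0 := exp_pos (- t)).
replace ((rgamma mu + rgamma (mu + 1)) * (Rpower y (mu - 1) + Rpower b (mu - 1)) * (x ^ k * b ^ k / INR (fact k)))
  with (x ^ k / INR (fact k) * (rgamma mu + rgamma (mu + 1)) * ((Rpower y (mu - 1) + Rpower b (mu - 1)) * b ^ k * 1))
  by (field; apply not_0_INR, fact_neq_0).
apply Rmult_le_compat.
- apply Rmult_le_pos; lra.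
- apply Rmult_le_pos; [apply Rmult_le_pos|]; lra.
- apply Rmult_le_compat_l; lra.
- apply Rmult_le_compat; [apply Rmult_le_pos; lra|lra|apply Rmult_le_compat; lra|exact He].
Qed.

Lemma MarcumQ_pos_eq mu x y : 0 <= mu -> 0 < x -> 0 < y ->
  MarcumQ mu x y = exp (- x) * Series (fun k => x ^ k / INR (fact k) * reg_upper_gamma (mu + INR k) y).
Proof.
intros Hmu Hx Hy.
set (I := fun k => x ^ k / INR (fact k) * reg_upper_gamma (mu + INR k) y).
assert (HQ : forall k, 0 <= reg_upper_gamma (mu + INR k) y <= 1)
  by (intros k; apply reg_upper_gamma_bounds; [generalize (pos_INR k); lra|exact Hy]).
assert (HIs : ex_series I).
{ apply (ex_series_le I (fun k => x ^ k / INR (fact k))); [|exists (exp x); apply is_series_exp].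
  intros k; specialize (HQ k); assert (Hxk := exp_term_nonneg x k (Rlt_le _ _ Hx)).
  change (Rabs (I k) <= x ^ k / INR (fact k)); unfold I; rewrite Rabs_pos_eq; nra. }
assert (Hint : is_RInt_gen (fun t => Series (fun k => marcum_term mu x k t))
                 (at_point y) (Rbar_locally p_infty) (Series I)).
{ apply is_RInt_gen_Series; [| | |exact HIs|].
  - intros k t _; apply marcum_term_nonneg; lra.
  - intros k b Hb; apply (ex_RInt_scal (V := R_NormedModule)), ex_RInt_gamma_integrand; lra.
  - intros k; unfold marcum_term, I, reg_upper_gamma; rewrite <- Rmult_assoc.
    apply (is_RInt_gen_scal (gamma_integrand (mu + INR k))), upper_gamma_correct, Hy.
  - intros b Hb.
    exists (fun k => (rgamma mu + rgamma (mu + 1)) * (Rpower y (mu - 1) + Rpower b (mu - 1))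
                     * ((x * b) ^ k / INR (fact k))); split.
    + apply (ex_series_scal_l (V := R_NormedModule)); exists (exp (x * b)); apply is_series_exp.
    + intros k t Ht; rewrite Rabs_pos_eq by (apply marcum_term_nonneg; lra).
      apply marcum_term_le; lra. }
unfold MarcumQ; destruct (Rlt_dec 0 x) as [_|]; [|lra].
rewrite (is_RInt_gen_unique _ (exp (- x) * Rpower x ((mu - 1) / 2) * Series I)).
- assert (Ep : Rpower x ((1 - mu) / 2) * Rpower x ((mu - 1) / 2) = 1).
  { rewrite <- Rpower_plus; replace ((1 - mu) / 2 + (mu - 1) / 2) with 0 by field; apply Rpower_O, Hx. }
  set (p := Rpower x ((1 - mu) / 2)) in *; set (q := Rpower x ((mu - 1) / 2)) in *.
  set (e := exp (- x)); set (S := Series I); clearbody p q e S.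
  transitivity (p * q * (e * S)); [ring|rewrite Ep; ring].
- assert (Hc := is_RInt_gen_scal _ (exp (- x) * Rpower x ((mu - 1) / 2)) _ Hint).
  change (exp (- x) * Rpower x ((mu - 1) / 2) * Series I)
    with (scal (exp (- x) * Rpower x ((mu - 1) / 2)) (Series I)).
  eapply is_RInt_gen_ext; [|exact Hc].
  apply (filter_imp (fun ab => 0 < Rmin (fst ab) (snd ab))); [|apply filter_prod_Rmin_pos; exact Hy].
  intros ab Hab t Ht; rewrite marcum_integrand_eq by lra; reflexivity.
Qed.

Definition marcum_coef (mu y : R) (k : nat) := reg_upper_gamma (mu + INR k) y / INR (fact k).

Lemma CV_radius_marcum_coef mu y : 0 <= mu -> 0 < y -> CV_radius (marcum_coef mu y) = p_infty.
Proof.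
intros Hmu Hy; apply (CV_radius_le_fact _ 1); intros k; unfold marcum_coef.
assert (HQ : 0 <= reg_upper_gamma (mu + INR k) y <= 1)
  by (apply reg_upper_gamma_bounds; [generalize (pos_INR k); lra|exact Hy]).
assert (HF := INR_fact_pos k).
rewrite Rabs_pos_eq by (apply Rdiv_le_0_compat; lra).
apply Rmult_le_compat_r; [left; apply Rinv_0_lt_compat|]; lra.
Qed.

Lemma MarcumQ_PSeries mu x y : 0 <= mu -> 0 <= x -> 0 < y ->
  MarcumQ mu x y = exp (- x) * PSeries (marcum_coef mu y) x.
Proof.
intros Hmu [Hx| <-] Hy.
- rewrite MarcumQ_pos_eq by assumption; unfold PSeries; f_equal.
  apply Series_ext; intros k; unfold marcum_coef, Rdiv; ring.
- unfold MarcumQ; destruct (Rlt_dec 0 0); [lra|].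
  rewrite PSeries_0, Ropp_0, exp_0; unfold marcum_coef, reg_upper_gamma; simpl.
  rewrite Rplus_0_r; field.
Qed.

(* [ibessel s u = u^(-s/2) I_s(2 sqrt u)], an entire function of [u]. *)
Definition ibessel_coef (s : R) (n : nat) := rgamma (s + INR n + 1) / INR (fact n).
Definition ibessel (s u : R) := PSeries (ibessel_coef s) u.

Lemma ibessel_coef_nonneg s n : 0 <= s -> 0 <= ibessel_coef s n.
Proof.
intros Hs; apply Rdiv_le_0_compat; [apply rgamma_nonneg|apply INR_fact_pos].
generalize (pos_INR n); lra.
Qed.

Lemma CV_radius_ibessel_coef s : 0 <= s -> CV_radius (ibessel_coef s) = p_infty.
Proof.
intros Hs; apply (CV_radius_le_fact _ (rgamma (s + 1) + rgamma (s + 1 + 1))); intros k.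
rewrite Rabs_pos_eq by (apply ibessel_coef_nonneg, Hs); unfold ibessel_coef.
apply Rmult_le_compat_r; [left; apply Rinv_0_lt_compat, INR_fact_pos|].
replace (s + INR k + 1) with (s + 1 + INR k) by ring; apply rgamma_plus_INR_le; lra.
Qed.

Lemma is_derive_ibessel s u : 0 <= s -> is_derive (ibessel s) u (ibessel (s + 1) u).
Proof.
intros Hs; unfold ibessel.
replace (PSeries (ibessel_coef (s + 1)) u) with (PSeries (PS_derive (ibessel_coef s)) u).
- apply is_derive_PSeries; rewrite CV_radius_ibessel_coef by exact Hs; exact I.
- apply PSeries_ext; intros n; unfold PS_derive, ibessel_coef.
  rewrite fact_simpl, mult_INR, S_INR.
  replace (s + (INR n + 1) + 1) with (s + 1 + INR n + 1) by ring.
  assert (0 < INR (fact n)) by apply INR_fact_pos.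
  generalize (pos_INR n); intros; field; lra.
Qed.

Lemma ibessel_pos s u : 0 <= s -> 0 <= u -> 0 < ibessel s u.
Proof.
intros Hs Hu.
assert (Hex : ex_series (fun k => ibessel_coef s k * u ^ k)).
{ apply ex_pseries_R, CV_radius_inside; rewrite CV_radius_ibessel_coef by exact Hs; exact I. }
apply Rlt_le_trans with (sum_n (fun k => ibessel_coef s k * u ^ k) 0).
- rewrite sum_O; unfold ibessel_coef; simpl.
  rewrite Rplus_0_r, Rmult_1_r, Rdiv_1_r; apply rgamma_pos; lra.
- apply sum_n_le_Series; [|exact Hex].
  intros k; apply Rmult_le_pos; [apply ibessel_coef_nonneg, Hs|apply pow_le, Hu].
Qed.

Lemma ibessel_rec s u : 0 <= s -> ibessel s u = (s + 1) * ibessel (s + 1) u + u * ibessel (s + 2) u.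
Proof.
intros Hs; unfold ibessel.
rewrite <- PSeries_scal, <- PSeries_incr_1, <- PSeries_plus.
2: { apply CV_radius_inside; rewrite CV_radius_scal, CV_radius_ibessel_coef by lra; exact I. }
2: { apply CV_radius_inside; rewrite CV_radius_incr_1, CV_radius_ibessel_coef by lra; exact I. }
apply PSeries_ext; intros n; unfold PS_plus, PS_scal, PS_incr_1.
change (plus ?a ?b) with (a + b); change (scal ?a ?b) with (a * b).
destruct n as [|n]; unfold ibessel_coef.
- change (@zero R_NormedModule) with 0; simpl; rewrite !Rplus_0_r.
  rewrite (rgamma_S (s + 1)) by lra; replace (s + 1 + 1) with (s + 2) by ring; field.
- rewrite fact_simpl, mult_INR, !S_INR.
  assert (0 < INR (fact n)) by apply INR_fact_pos; assert (0 <= INR n) by apply pos_INR.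
  replace (s + 1 + (INR n + 1) + 1) with (s + INR n + 2 + 1) by ring.
  replace (s + 2 + INR n + 1) with (s + INR n + 2 + 1) by ring.
  replace (s + (INR n + 1) + 1) with (s + INR n + 2) by ring.
  rewrite (rgamma_S (s + INR n + 2)) by lra; field; lra.
Qed.

(** * Turan-type inequalities *)

Section Turan.

Variables (d : R) (F G W : R -> R).
Hypothesis Hd : 1 / 2 <= d.
Hypothesis HF : forall u, is_derive F u (G u).
Hypothesis HG : forall u, is_derive G u (W u).
Hypothesis Hrec : forall u, F u = (d + 1) * G u + u * W u.
Hypothesis HFpos : forall u, 0 <= u -> 0 < F u.
Hypothesis HGpos : forall u, 0 <= u -> 0 < G u.

Definition turan_phi (u : R) := F u * F u - d * F u * G u - u * G u * G u.

Definition turan_lambda (u : R) :=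
  (d - 2 * u) * F u * F u + (2 * d + 1) * u * F u * G u + 2 * u * u * G u * G u.

Lemma is_derive_turan_lambda u : is_derive turan_lambda u ((2 * d - 1) * turan_phi u).
Proof.
unfold turan_lambda, turan_phi; auto_derive.
- repeat split; eexists; [apply HF|apply HF|apply HF|apply HG|apply HG|apply HG].
- replace (Derive (fun x : R => F x) u) with (G u) by (symmetry; apply is_derive_unique, HF).
  replace (Derive (fun x : R => G x) u) with (W u) by (symmetry; apply is_derive_unique, HG).
  rewrite (Hrec u); ring.
Qed.

Lemma is_derive_turan_phi_weighted u : 0 < u ->
  is_derive (fun w => Rpower w d * turan_phi w) u (Rpower u (d - 1) * (u * G u * G u + d * F u * G u)).
Proof.
intros Hu; unfold turan_phi, Rpower; auto_derive.
- repeat split; [lra|..]; eexists; [apply HF|apply HF|apply HF|apply HG|apply HG|apply HG].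
- replace (Derive (fun x : R => F x) u) with (G u) by (symmetry; apply is_derive_unique, HF).
  replace (Derive (fun x : R => G x) u) with (W u) by (symmetry; apply is_derive_unique, HG).
  rewrite (Hrec u).
  change RinvImpl.Rinv with Rinv.
  replace (d * ln u) with ((d - 1) * ln u + ln u) by ring; rewrite exp_plus, exp_ln by exact Hu.
  field; lra.
Qed.

Lemma turan_phi_0 : 0 < turan_phi 0.
Proof.
assert (H0 := Hrec 0); assert (HF0 := HFpos 0 (Rle_refl 0)); assert (HG0 := HGpos 0 (Rle_refl 0)).
unfold turan_phi; replace (F 0 * F 0 - d * F 0 * G 0 - 0 * G 0 * G 0) with (F 0 * (F 0 - d * G 0)) by ring.
apply Rmult_lt_0_compat; [exact HF0|rewrite H0; lra].
Qed.

Lemma turan_phi_pos_near_0 u : 0 < u -> exists e, 0 < e < u /\ 0 < turan_phi e.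
Proof.
intros Hu.
assert (Hcont : continuous turan_phi 0).
{ apply (ex_derive_continuous (V := R_NormedModule)); unfold turan_phi; auto_derive.
  repeat split; eexists; [apply HF|apply HF|apply HF|apply HG|apply HG|apply HG]. }
destruct (Hcont (fun z => Rabs (z - turan_phi 0) < turan_phi 0)) as [del Hdel].
{ exists (mkposreal _ turan_phi_0); intros z Hz; exact Hz. }
set (e := Rmin del u / 2).
assert (Hmin : 0 < Rmin del u) by (apply Rmin_glb_lt; [apply cond_pos|exact Hu]).
assert (He : e < Rmin del u) by (unfold e; lra).
exists e; split; [split; [unfold e; lra|generalize (Rmin_r del u); lra]|].
assert (Hb : ball 0 del e).
{ change (Rabs (e - 0) < del); rewrite Rminus_0_r, Rabs_pos_eq by (unfold e; lra).
  generalize (Rmin_l del u); lra. }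
specialize (Hdel e Hb); simpl in Hdel; apply Rabs_def2 in Hdel; lra.
Qed.

Lemma turan_phi_pos u : 0 <= u -> 0 < turan_phi u.
Proof.
intros [Hu| <-]; [|exact turan_phi_0].
destruct (turan_phi_pos_near_0 u Hu) as [e [He Hphie]].
destruct (MVT_cor2 (fun w => Rpower w d * turan_phi w)
  (fun w => Rpower w (d - 1) * (w * G w * G w + d * F w * G w)) e u (proj2 He)) as [c [Hc Hcin]].
{ intros c Hc; apply is_derive_Reals, is_derive_turan_phi_weighted; lra. }
assert (Hdc : 0 < Rpower c (d - 1) * (c * G c * G c + d * F c * G c)).
{ assert (0 < F c) by (apply HFpos; lra); assert (0 < G c) by (apply HGpos; lra).
  apply Rmult_lt_0_compat; [apply exp_pos|].
  assert (0 < c * G c * G c) by (repeat apply Rmult_lt_0_compat; lra).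
  assert (0 < d * F c * G c) by (repeat apply Rmult_lt_0_compat; lra).
  lra. }
assert (Hpu := exp_pos (d * ln u)); assert (Hpe := exp_pos (d * ln e)).
fold (Rpower u d) (Rpower e d) in Hpu, Hpe.
assert (Rpower e d * turan_phi e < Rpower u d * turan_phi u).
{ assert (0 < Rpower c (d - 1) * (c * G c * G c + d * F c * G c) * (u - e)) by (apply Rmult_lt_0_compat; lra).
  lra. }
assert (0 < Rpower e d * turan_phi e) by (apply Rmult_lt_0_compat; assumption).
apply (Rmult_lt_reg_l (Rpower u d)); lra.
Qed.

Lemma turan_lambda_pos u : 0 <= u -> 0 < turan_lambda u.
Proof.
assert (HL0 : 0 < turan_lambda 0).
{ assert (0 < F 0) by (apply HFpos; lra).
  unfold turan_lambda; replace ((d - 2 * 0) * F 0 * F 0 + (2 * d + 1) * 0 * F 0 * G 0 + 2 * 0 * 0 * G 0 * G 0)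
    with (d * (F 0 * F 0)) by ring.
  apply Rmult_lt_0_compat; [lra|apply Rmult_lt_0_compat; assumption]. }
intros [Hu| <-]; [|exact HL0].
destruct (MVT_cor2 turan_lambda (fun w => (2 * d - 1) * turan_phi w) 0 u Hu) as [c [Hc Hcin]].
{ intros c _; apply is_derive_Reals, is_derive_turan_lambda. }
assert (0 < turan_phi c) by (apply turan_phi_pos; lra).
assert (0 <= (2 * d - 1) * turan_phi c * (u - 0)) by (repeat apply Rmult_le_pos; lra).
lra.
Qed.

End Turan.

Lemma ibessel_turan_pos mu u : 0 <= mu -> 0 <= u ->
  0 < turan_phi (mu + 1) (ibessel (mu + 1)) (ibessel (mu + 2)) u /\
  0 < turan_lambda (mu + 1) (ibessel (mu + 1)) (ibessel (mu + 2)) u.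
Proof.
intros Hmu Hu.
assert (Hd : 1 / 2 <= mu + 1) by lra.
assert (HF : forall v, is_derive (ibessel (mu + 1)) v (ibessel (mu + 2) v)).
{ intros v; replace (mu + 2) with (mu + 1 + 1) by ring; apply is_derive_ibessel; lra. }
assert (HG : forall v, is_derive (ibessel (mu + 2)) v (ibessel (mu + 3) v)).
{ intros v; replace (mu + 3) with (mu + 2 + 1) by ring; apply is_derive_ibessel; lra. }
assert (Hrec : forall v, ibessel (mu + 1) v = (mu + 1 + 1) * ibessel (mu + 2) v + v * ibessel (mu + 3) v).
{ intros v; rewrite (ibessel_rec (mu + 1)) by lra.
  replace (mu + 1 + 2) with (mu + 3) by ring; replace (mu + 1 + 1) with (mu + 2) by ring; reflexivity. }
assert (HFpos : forall v, 0 <= v -> 0 < ibessel (mu + 1) v) by (intros; apply ibessel_pos; lra).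
assert (HGpos : forall v, 0 <= v -> 0 < ibessel (mu + 2) v) by (intros; apply ibessel_pos; lra).
split; [apply (turan_phi_pos _ _ _ _ Hd HF HG Hrec HFpos HGpos u Hu)
       |apply (turan_lambda_pos _ _ _ _ Hd HF HG Hrec HFpos HGpos u Hu)].
Qed.

(** * The derivatives in x *)

Lemma PSeries_derive_minus_marcum_coef mu y x : 0 <= mu -> 0 < y ->
  PSeries (PS_derive (marcum_coef mu y)) x - PSeries (marcum_coef mu y) x
  = exp (- y) * Rpower y mu * ibessel mu (x * y).
Proof.
intros Hmu Hy.
assert (Hex : forall a, Rbar_lt (Rabs x) (CV_radius a) -> ex_series (fun k => a k * x ^ k))
  by (intros a Ha; apply ex_pseries_R, CV_radius_inside, Ha).
unfold ibessel, PSeries; rewrite <- Series_minus, <- Series_scal_l.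
- apply Series_ext; intros k; unfold PS_derive, marcum_coef, ibessel_coef.
  rewrite S_INR, <- Rplus_assoc, reg_upper_gamma_S by (generalize (pos_INR k); lra).
  rewrite fact_simpl, mult_INR, S_INR, Rpower_plus, Rpower_pow, Rpow_mult_distr by lra.
  assert (0 < INR (fact k)) by apply INR_fact_pos; generalize (pos_INR k); intros.
  field; lra.
- apply Hex; rewrite CV_radius_derive, CV_radius_marcum_coef by assumption; exact I.
- apply Hex; rewrite CV_radius_marcum_coef by assumption; exact I.
Qed.

Definition marcum_dx (mu y x : R) := exp (- x) * (exp (- y) * Rpower y mu) * ibessel mu (x * y).

Definition marcum_dxx (mu y x : R) :=
  exp (- x) * (exp (- y) * Rpower y mu) * (y * ibessel (mu + 1) (x * y) - ibessel mu (x * y)).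

Lemma is_derive_marcum_PSeries mu y x : 0 <= mu -> 0 < y ->
  is_derive (fun s => exp (- s) * PSeries (marcum_coef mu y) s) x (marcum_dx mu y x).
Proof.
intros Hmu Hy.
assert (HP : is_derive (PSeries (marcum_coef mu y)) x (PSeries (PS_derive (marcum_coef mu y)) x))
  by (apply is_derive_PSeries; rewrite CV_radius_marcum_coef by assumption; exact I).
assert (He : is_derive (fun s => exp (- s)) x (- exp (- x))) by (auto_derive; [exact I|ring]).
unfold marcum_dx; rewrite Rmult_assoc, <- PSeries_derive_minus_marcum_coef by assumption.
replace (exp (- x) * (PSeries (PS_derive (marcum_coef mu y)) x - PSeries (marcum_coef mu y) x))
  with (- exp (- x) * PSeries (marcum_coef mu y) x + exp (- x) * PSeries (PS_derive (marcum_coef mu y)) x)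
  by ring.
exact (is_derive_mult _ _ x _ _ He HP (fun a b => Rmult_comm a b)).
Qed.

Lemma is_derive_marcum_dx mu y x : 0 <= mu -> is_derive (marcum_dx mu y) x (marcum_dxx mu y x).
Proof.
intros Hmu; assert (H := is_derive_ibessel mu (x * y) Hmu).
unfold marcum_dx, marcum_dxx; auto_derive.
- eexists; exact H.
- replace (Derive (fun u : R => ibessel mu u) (x * y)) with (ibessel (mu + 1) (x * y))
    by (symmetry; apply is_derive_unique, H).
  ring.
Qed.

Lemma marcum_dxx_eq mu y x : 0 <= mu ->
  marcum_dxx mu y x = exp (- x) * (exp (- y) * Rpower y mu)
    * (y * ibessel (mu + 1) (x * y) - ((mu + 1) * ibessel (mu + 1) (x * y) + x * y * ibessel (mu + 2) (x * y))).
Proof.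
intros Hmu; unfold marcum_dxx; rewrite (ibessel_rec mu) by exact Hmu.
replace (mu + 2) with (mu + 1 + 1) by ring; reflexivity.
Qed.

Lemma is_derive_nonneg_of_is_derive (f g : R -> R) x l :
  0 <= x -> (forall z, 0 <= z -> f z = g z) -> is_derive g x l -> is_derive_nonneg f x l.
Proof.
intros Hx Hfg Hd; apply is_derive_Reals in Hd.
intros P [eps HP]; destruct (Hd eps (cond_pos eps)) as [del Hdel].
exists del; intros h Hh [Hh0 Hxh]; apply HP.
change (Rabs ((f (x + h) - f x) / h - l) < eps).
rewrite !Hfg by lra; apply Hdel; [exact Hh0|].
change (Rabs (h - 0) < del) in Hh; rewrite Rminus_0_r in Hh; exact Hh.
Qed.

Lemma second_derivative_sign_nonpos d y x F G : 0 < F -> 0 < G -> 0 < y -> 0 <= x -> y <= d ->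
  y * F - (d * F + x * y * G) <= 0 /\ (y * F - (d * F + x * y * G) = 0 <-> x = 0 /\ y = d).
Proof.
intros HF HG Hy Hx Hyd.
assert (H1 : (y - d) * F <= 0) by nra.
assert (H2 : 0 <= x * y * G) by (repeat apply Rmult_le_pos; lra).
split; [lra|split].
- intros H0.
  assert (E1 : (y - d) * F = 0) by lra; assert (E2 : x * y * G = 0) by lra.
  apply Rmult_integral in E1; apply Rmult_integral in E2.
  destruct E1 as [E1|E1]; [|lra].
  destruct E2 as [E2|E2]; [apply Rmult_integral in E2; destruct E2 as [E2|E2]|]; split; lra.
- intros [-> ->]; ring.
Qed.

Lemma second_derivative_sign_neg d y x F G : 0 < F -> 0 < G -> 0 < y -> 0 <= x -> y - (d - 1 / 2) < x ->
  0 < (d - 2 * (x * y)) * F * F + (2 * d + 1) * (x * y) * F * G + 2 * (x * y) * (x * y) * G * G ->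
  y * F - (d * F + x * y * G) < 0.
Proof.
intros HF HG Hy Hx Hxy HL.
set (H := d * F + x * y * G).
assert (Hid : (d - 2 * (x * y)) * F * F + (2 * d + 1) * (x * y) * F * G + 2 * (x * y) * (x * y) * G * G
  = 2 * ((H - y * F) * (H + y * F - (d - 1 / 2) * F) - (x - (y - (d - 1 / 2))) * (y * F * F)))
  by (unfold H; field).
apply Rnot_le_lt; intros Hge.
assert (P1 : (H - y * F) * (H + y * F - (d - 1 / 2) * F) <= 0).
{ apply Rmult_le_0_r; [lra|]; unfold H.
  assert (0 <= x * y * G) by (repeat apply Rmult_le_pos; lra); assert (0 < y * F) by (apply Rmult_lt_0_compat; lra); nra. }
assert (P2 : 0 < (x - (y - (d - 1 / 2))) * (y * F * F)) by (repeat apply Rmult_lt_0_compat; lra).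
lra.
Qed.

Lemma second_derivative_sign_pos d y x F G : 0 < F -> 0 < G -> 0 < y -> 0 <= x -> x < y - d ->
  0 < F * F - d * F * G - x * y * G * G -> 0 < y * F - (d * F + x * y * G).
Proof.
intros HF HG Hy Hx Hxy HP.
set (H := d * F + x * y * G).
assert (Hid : - (x * y) * (F * F - d * F * G - x * y * G * G)
  = (H - y * F) * (H + y * F - d * F) + (y - d - x) * (y * F * F)) by (unfold H; ring).
apply Rnot_le_lt; intros Hle.
assert (P1 : 0 <= (H - y * F) * (H + y * F - d * F)).
{ apply Rmult_le_pos; [lra|]; unfold H.
  assert (0 <= x * y * G) by (repeat apply Rmult_le_pos; lra); assert (0 < y * F) by (apply Rmult_lt_0_compat; lra); nra. }
assert (P2 : 0 < (y - d - x) * (y * F * F)) by (repeat apply Rmult_lt_0_compat; lra).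
assert (P3 : 0 <= x * y * (F * F - d * F * G - x * y * G * G)) by (repeat apply Rmult_le_pos; lra).
lra.
Qed.

Lemma marcum_dxx_factor mu y x : 0 <= mu -> 0 < y -> 0 <= x ->
  exists A F G, 0 < A /\ 0 < F /\ 0 < G /\
    marcum_dxx mu y x = A * (y * F - ((mu + 1) * F + x * y * G)) /\
    0 < F * F - (mu + 1) * F * G - x * y * G * G /\
    0 < (mu + 1 - 2 * (x * y)) * F * F + (2 * (mu + 1) + 1) * (x * y) * F * G
        + 2 * (x * y) * (x * y) * G * G.
Proof.
intros Hmu Hy Hx.
assert (Hu : 0 <= x * y) by (apply Rmult_le_pos; lra).
destruct (ibessel_turan_pos mu (x * y) Hmu Hu) as [Hphi Hlam].
exists (exp (- x) * (exp (- y) * Rpower y mu)), (ibessel (mu + 1) (x * y)), (ibessel (mu + 2) (x * y)).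
repeat split.
- apply Rmult_lt_0_compat; [|apply Rmult_lt_0_compat]; apply exp_pos.
- apply ibessel_pos; lra.
- apply ibessel_pos; lra.
- apply marcum_dxx_eq, Hmu.
- exact Hphi.
- exact Hlam.
Qed.

Theorem theorem1 (mu y : R) (hmu : 0 <= mu) (hy : 0 < y) :
  exists D1 D2 : R -> R,
    (forall x, 0 <= x -> is_derive_nonneg (fun s => MarcumQ mu s y) x (D1 x)) /\
    (forall x, 0 <= x -> is_derive_nonneg D1 x (D2 x)) /\
    (y <= mu + 1 ->
       forall x, 0 <= x -> D2 x <= 0 /\ (D2 x = 0 <-> (x = 0 /\ y = mu + 1))) /\
    (forall x, 0 <= x -> y - mu - 1 / 2 < x -> D2 x < 0) /\
    (forall x, 0 <= x -> x < y - mu - 1 -> 0 < D2 x).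
Proof.
exists (marcum_dx mu y), (marcum_dxx mu y); split; [|split; [|split; [|split]]].
- intros x Hx; apply (is_derive_nonneg_of_is_derive _ (fun s => exp (- s) * PSeries (marcum_coef mu y) s)).
  + exact Hx.
  + intros z Hz; apply MarcumQ_PSeries; assumption.
  + apply is_derive_marcum_PSeries; assumption.
- intros x Hx; apply (is_derive_nonneg_of_is_derive _ (marcum_dx mu y)); [exact Hx|reflexivity|].
  apply is_derive_marcum_dx, hmu.
- intros Hyd x Hx; destruct (marcum_dxx_factor mu y x hmu hy Hx) as (A & F & G & HA & HF & HG & -> & _).
  destruct (second_derivative_sign_nonpos (mu + 1) y x F G HF HG hy Hx Hyd) as [Hle Heq].
  split; [nra|rewrite <- Heq; split; [|intros ->; ring]].
  intros H0; apply Rmult_integral in H0; destruct H0; [lra|assumption].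
- intros x Hx Hxy; destruct (marcum_dxx_factor mu y x hmu hy Hx) as (A & F & G & HA & HF & HG & -> & _ & HL).
  assert (y * F - ((mu + 1) * F + x * y * G) < 0) by (apply second_derivative_sign_neg; auto; lra).
  nra.
- intros x Hx Hxy; destruct (marcum_dxx_factor mu y x hmu hy Hx) as (A & F & G & HA & HF & HG & -> & HP & _).
  assert (0 < y * F - ((mu + 1) * F + x * y * G)) by (apply second_derivative_sign_pos; auto; lra).
  nra.
Qed.
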